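(* There is a polynomial $p$ such that the following holds. Let $\mathbb{F}$ be a field, let $n,s\ge 1$ and $d\ge 0$, let $N_{n,d}=\binom{n+d}{d}$, and let $\mathcal{D}\subseteq\mathbb{F}[c_1,\ldots,c_{N_{n,d}}]$ be a class of polynomials whose variables are identified with the coefficients of polynomials in $\mathbb{F}[x_1,\ldots,x_n]^{d}$ (polynomials of total degree at most $d$). If there is an $s$-succinct hitting set for $\mathcal{D}$, then there is a $p(n,d,s)$-succinct generator for $\mathcal{D}$ which is computable by algebraic circuits of size at most $p(n,d,s)$.
   Context: $\mathbb{F}[x_1,\ldots,x_n]^d$ denotes the space of polynomials of total degree at most $d$; there are $N_{n,d}$ monomials of degree at most $d$, and $\mathrm{coeff}(f)\in\mathbb{F}^{N_{n,d}}$ denotes the vector of coefficients of $f$ in the monomial basis. A set $\mathcal{H}\subseteq\mathbb{F}^{N_{n,d}}$ is a hitting set for $\mathcal{D}$ if every non-zero $D\in\mathcal{D}$ has some $\alpha\in\mathcal{H}$ with $D(\alpha)\ne0$. An $s$-succinct hitting set for $\mathcal{D}$ is a set $\mathcal{C}\subseteq\mathbb{F}[x_1,\ldots,x_n]^d$ of polynomials, each computed by an algebraic circuit of size at most $s$, such that $\{\mathrm{coeff}(f):f\in\mathcal{C}\}$ is a hitting set for $\mathcal{D}$. A polynomial map $\mathcal{G}=(\mathcal{G}_{x^a}(y))_{a}:\mathbb{F}^{r}\to\mathbb{F}^{N_{n,d}}$ (coordinates indexed by the monomials $x^a$ of degree at most $d$) is an $s'$-succinct generator for $\mathcal{D}$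 computable by size-$s''$ circuits if, writing $G(x,y)=\sum_a \mathcal{G}_{x^a}(y)x^a$: (i) $G(x,y)$ is computed by an algebraic circuit of size at most $s''$; (ii) for every $\alpha\in\mathbb{F}^r$, $G(x,\alpha)\in\mathbb{F}[x]^d$ is computed by a circuit of size at most $s'$; (iii) for every $D\in\mathcal{D}$, $D$ is non-zero iff $D(\mathcal{G}(y))$ is non-zero as a polynomial in $y$. *)

From HB Require Import structures.
From mathcomp Require Import all_boot all_order all_algebra.
From mathcomp Require Import mpoly.
Set Implicit Arguments. Unset Strict Implicit. Unset Printing Implicit Defensive.
Import Order.TTheory GRing.Theory Num.Theory.
Local Open Scope ring_scope.

(* A circuit is a non-empty list of gates; gate number k may be an input
   variable x_i, a field constant, or the sum / product of two gates with
   indices < k. *)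
Inductive gate (F : Type) :=
  | GVar of nat
  | GConst of F
  | GAdd of nat & nat
  | GMul of nat & nat.
Arguments GVar {F}. Arguments GAdd {F}. Arguments GMul {F}.

Definition circuit (F : Type) := seq (gate F).

Definition csize (F : Type) (c : circuit F) : nat := size c.

Fixpoint wf_gates (F : Type) (m k : nat) (c : circuit F) : bool :=
  match c with
  | [::] => true
  | g :: c' =>
      let ok := match g with
                | GVar i => (i < m)%N
                | GConst _ => true
                | GAdd j l => (j < k)%N && (l < k)%N
                | GMul j l => (j < k)%N && (l < k)%N
                end in
      ok && wf_gates m k.+1 c'
  end.

Section Eval.
Variables (F : comNzRingType) (m : nat).

Fixpoint eval_gates (vals : seq {mpoly F[m]}) (c : circuit F)
  : seq {mpoly F[m]} :=
  match c with
  | [::] => vals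
  | g :: c' =>
      let v := match g with
               | GVar i => if (i < m)%N =P true is ReflectT h
                           then 'X_(Ordinal h) else 0
               | GConst a => a%:MP
               | GAdd j l => nth 0 vals j + nth 0 vals l
               | GMul j l => nth 0 vals j * nth 0 vals l
               end in
      eval_gates (rcons vals v) c'
  end.

Definition computes (c : circuit F) (f : {mpoly F[m]}) : Prop :=
  [/\ (0 < size c)%N, wf_gates m 0 c & last 0 (eval_gates [::] c) = f].

Definition has_circuit_size (f : {mpoly F[m]}) (s : nat) : Prop :=
  exists c : circuit F, computes c f /\ (csize c <= s)%N.
End Eval.

Definition Nnd (n d : nat) : nat := #|{: 'X_{1..n < d.+1}}|.

Definition mon (n d : nat) (i : 'I_(Nnd n d)) : 'X_{1..n} :=
  bmnm (enum_val i).

Definition deg_le (F : nzRingType) (n d : nat) (f : {mpoly F[n]}) : bool :=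
  (msize f <= d.+1)%N.

Definition coeffv (F : nzRingType) (n d : nat) (f : {mpoly F[n]})
  : 'I_(Nnd n d) -> F := fun i => f@_(mon i).

Section HS.
Variables (F : fieldType) (n d : nat).
Local Notation N := (Nnd n d).

Definition hitting_set (Dcl : {mpoly F[N]} -> Prop)
  (H : ('I_N -> F) -> Prop) : Prop :=
  forall D, Dcl D -> D != 0 -> exists2 a, H a & D.@[a] != 0.

Definition succinct_hitting_set (s : nat) (Dcl : {mpoly F[N]} -> Prop)
  (C : {mpoly F[n]} -> Prop) : Prop :=
  [/\ (forall f, C f -> deg_le d f),
      (forall f, C f -> has_circuit_size f s) &
      hitting_set Dcl (fun a => exists2 f, C f & a = @coeffv F n d f)].

(* x-variables are 0..n-1, y-variables are n..n+r-1 in F[x,y] *)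
Definition yvar (r : nat) : r.-tuple {mpoly F[n + r]} :=
  [tuple 'X_(rshift n j) | j < r].

(* G(x,y) = sum_a G_{x^a}(y) x^a *)
Definition gen_poly (r : nat) (G : 'I_N -> {mpoly F[r]}) : {mpoly F[n + r]} :=
  \sum_(i < N) (G i \mPo yvar r) * mmap1 (fun k : 'I_n => 'X_(lshift r k)) (mon i).

Definition gen_at (r : nat) (G : 'I_N -> {mpoly F[r]}) (alpha : 'I_r -> F)
  : {mpoly F[n]} :=
  \sum_(i < N) (G i).@[alpha] *: 'X_[mon i].

Definition succinct_generator (s' s'' : nat) (Dcl : {mpoly F[N]} -> Prop)
  (r : nat) (G : 'I_N -> {mpoly F[r]}) : Prop :=
  [/\ has_circuit_size (gen_poly G) s'',
      (forall alpha : 'I_r -> F, has_circuit_size (gen_at G alpha) s') &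
      (forall D, Dcl D -> (D != 0 <-> D \mPo [tuple G i | i < N] != 0))].
End HS.

Definition eval3 (p : {mpoly int[3]}) (n d s : nat) : int :=
  p.@[fun i : 'I_3 => (nth 0%N [:: n; d; s] i)%:Z].

From HB Require Import structures.
From mathcomp Require Import all_boot all_order all_algebra.
From mathcomp Require Import mpoly.
From mathcomp Require Import zify.
Set Implicit Arguments. Unset Strict Implicit. Unset Printing Implicit Defensive.
Import Order.TTheory GRing.Theory Num.Theory.
Local Open Scope ring_scope.

(* A circuit of size at most s over x_1, ..., x_n is a table of
   s * (n + 3s + 2) field constants: for each gate a constant, the weights of
   the inputs and of the earlier gates as summand, left factor and right
   factor, and an output flag.  Running the circuit with these selectors as
   fresh variables y gives a universal polynomial of which every polynomial
   computed by a circuit of size at most s is a specialisation.  Running it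
   instead on the homogeneous components in x of degree at most d (the
   degree-e component of a product is the convolution of the components of the
   factors) costs O((n + d + s)^3) gates and yields U(x, y), the part of
   degree at most d of the universal polynomial.  The generator G(y) is the
   vector of x-coefficients of U: then G(x, y) is U up to renaming variables,
   each G(x, alpha) is the specialisation U(x, alpha), and the coefficient
   vector of every element of the hitting set is a value G(y0), so that D(G(y))
   vanishes only when D does. *)

Section Circuits.
Variables (F : comNzRingType) (m : nat).
Local Notation R := {mpoly F[m]}.
Local Notation eval_gates := (@eval_gates F m).

Definition gate_value (vals : seq R) (g : gate F) : R :=
  match g with
  | GVar i => if (i < m)%N =P true is ReflectT h then 'X_(Ordinal h) else 0
  | GConst a => a%:MP
  | GAdd j l => nth 0 vals j + nth 0 vals l
  | GMul j l => nth 0 vals j * nth 0 vals l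
  end.

Lemma eval_gates_cons vals g c :
  eval_gates vals (g :: c) = eval_gates (rcons vals (gate_value vals g)) c.
Proof. by []. Qed.

Lemma eval_gates_cat vals c1 c2 :
  eval_gates vals (c1 ++ c2) = eval_gates (eval_gates vals c1) c2.
Proof. by elim: c1 vals => //= g c1 IH vals; exact: IH. Qed.

Lemma eval_gates_prefix vals c : exists t, eval_gates vals c = vals ++ t.
Proof.
elim: c vals => [|g c IH] vals /=; first by exists [::]; rewrite cats0.
have [t ->] := IH (rcons vals (gate_value vals g)).
by exists (gate_value vals g :: t); rewrite cat_rcons.
Qed.

Lemma size_eval_gates vals c : size (eval_gates vals c) = (size vals + size c)%N.
Proof. by elim: c vals => [|g c IH] vals /=; rewrite ?addn0 // IH size_rcons addSnnS. Qed.

Lemma wf_gates_cat k (c1 c2 : circuit F) :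
  wf_gates m k (c1 ++ c2) = wf_gates m k c1 && wf_gates m (k + size c1) c2.
Proof. by elim: c1 k => [|g c1 IH] k /=; rewrite ?addn0 // IH addSnnS andbA. Qed.

Lemma wf_gates_nth k (c : circuit F) i : wf_gates m k c -> (i < size c)%N ->
  wf_gates m (k + i) [:: nth (GConst 0) c i].
Proof.
elim: c k i => //= g c IH k [|i] /andP [wf_g wf_c] lt_i /=; first by rewrite addn0 wf_g.
by rewrite -addSnnS; apply: IH.
Qed.

Lemma gate_value_cat vals t g : wf_gates m (size vals) [:: g] ->
  gate_value (vals ++ t) g = gate_value vals g.
Proof. by case: g => [i|a|j l|j l] //= /andP [/andP [lt_j lt_l] _]; rewrite !nth_cat lt_j lt_l. Qed.

Lemma nth_eval_gates (c : circuit F) k : wf_gates m 0 c -> (k < size c)%N ->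
  nth 0 (eval_gates [::] c) k = gate_value (eval_gates [::] c) (nth (GConst 0) c k).
Proof.
move=> wf_c lt_k; have wf_k := wf_gates_nth wf_c lt_k.
set g := nth (GConst 0) c k; set V := eval_gates [::] (take k c).
have size_V : size V = k by rewrite size_eval_gates size_take lt_k.
have [t ->] : exists t, eval_gates [::] c = rcons V (gate_value V g) ++ t.
  rewrite -{1}(cat_take_drop k c) (drop_nth (GConst 0) lt_k) eval_gates_cat eval_gates_cons.
  exact: eval_gates_prefix.
by rewrite -cats1 -catA nth_cat size_V ltnn subnn gate_value_cat // size_V.
Qed.

Lemma has_circuit_size_le (f : R) k k' :
  (k <= k')%N -> has_circuit_size f k -> has_circuit_size f k'.
Proof. by move=> le_k [c [comp_c size_c]]; exists c; split => //; exact: leq_trans le_k. Qed.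

(* In [slp prev vs] every value of [vs] is an input, a constant, or the sum or
   product of two values available before it; [prev] lists the available
   values newest first. *)
Definition slp_leaf (v : R) := (exists i, v = 'X_i) \/ (exists a, v = a%:MP).

Lemma slp_leaf0 : slp_leaf 0.
Proof. by right; exists 0; rewrite mpolyC0. Qed.

Definition slp_step (prev : seq R) (v : R) :=
  slp_leaf v \/ exists a b, [/\ a \in prev, b \in prev & (v = a + b \/ v = a * b)].

Fixpoint slp (prev vs : seq R) : Prop :=
  if vs is v :: vs' then slp_step prev v /\ slp (v :: prev) vs' else True.

Lemma slp_extend_circuit vs prev (c : circuit F) :
  wf_gates m 0 c -> {subset prev <= eval_gates [::] c} -> slp prev vs ->
  exists c', wf_gates m 0 (c ++ c') /\ eval_gates [::] (c ++ c') = eval_gates [::] c ++ vs.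
Proof.
elim: vs prev c => [|v vs IH] prev c wf_c sub_prev /=.
  by move=> _; exists [::]; rewrite !cats0.
move=> [step_v slp_vs]; set V := eval_gates [::] c.
have size_V : size V = size c by rewrite size_eval_gates.
have [g [wf_g val_g]] : exists g, wf_gates m (size c) [:: g] /\ gate_value V g = v.
  case: step_v => [[[i ->]|[a ->]]|[a [b [a_prev b_prev v_ab]]]].
  - exists (GVar i); split; first by rewrite /= ltn_ord.
    by rewrite /=; case: eqP => [lt_i|]; [congr 'X_ _; apply: val_inj | rewrite ltn_ord].
  - by exists (GConst a).
  - have lt_a : (index a V < size c)%N by rewrite -size_V index_mem sub_prev.
    have lt_b : (index b V < size c)%N by rewrite -size_V index_mem sub_prev.
    case: v_ab => ->.
    + by exists (GAdd (index a V) (index b V)); rewrite /= lt_a lt_b !nth_index ?sub_prev.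
    + by exists (GMul (index a V) (index b V)); rewrite /= lt_a lt_b !nth_index ?sub_prev.
have wf_cg : wf_gates m 0 (rcons c g) by rewrite -cats1 wf_gates_cat wf_c.
have eval_cg : eval_gates [::] (rcons c g) = rcons V v.
  by rewrite -cats1 eval_gates_cat /= -val_g.
have sub_v : {subset v :: prev <= eval_gates [::] (rcons c g)}.
  by move=> w; rewrite eval_cg mem_rcons !inE => /orP [->|/sub_prev ->]; rewrite ?orbT.
have [c' [wf_c' eval_c']] := IH _ _ wf_cg sub_v slp_vs.
by exists (g :: c'); rewrite -cat_rcons wf_c' eval_c' eval_cg cat_rcons.
Qed.

Lemma slp_catl prev vs1 vs2 : slp prev (vs1 ++ vs2) -> slp prev vs1.
Proof. by elim: vs1 prev => //= v vs1 IH prev [step_v /IH]. Qed.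

Lemma slp_has_circuit_size vs f : slp [::] vs -> f \in vs -> has_circuit_size f (size vs).
Proof.
move=> + f_vs; case/splitPr: f_vs => vs1 vs2; rewrite -cat_rcons => /slp_catl slp_f.
have [c [wf_c eval_c]] := @slp_extend_circuit _ [::] [::] isT (fun x (h : x \in [::]) => h) slp_f.
rewrite /= in wf_c eval_c.
have size_c : size c = size (rcons vs1 f) by rewrite -eval_c size_eval_gates.
exists c; split; last by rewrite /csize size_c size_cat size_rcons /=; lia.
by split; rewrite ?size_c ?size_rcons // eval_c last_rcons.
Qed.

Lemma sub_slp prev prev' vs : {subset prev <= prev'} -> slp prev vs -> slp prev' vs.
Proof.
elim: vs prev prev' => //= v vs IH prev prev' sub [step_v slp_vs]; split.
  by case: step_v => [|[a [b [? ? ?]]]]; [left | right; exists a, b; split; rewrite ?sub].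
by apply: IH slp_vs => w; rewrite !inE => /orP [->|/sub ->]; rewrite ?orbT.
Qed.

Lemma slp_cat prev vs1 vs2 :
  slp prev vs1 -> slp (rev vs1 ++ prev) vs2 -> slp prev (vs1 ++ vs2).
Proof.
elim: vs1 prev => //= v vs1 IH prev [step_v slp_vs1]; rewrite rev_cons cat_rcons.
by split => //; apply: IH.
Qed.

Definition slp_gen (P : seq R) (k : nat) (G : seq R) :=
  exists vs, [/\ slp P vs, (size vs <= k)%N & {subset G <= vs ++ P}].

Lemma sub_slp_gen P P' k G : {subset P <= P'} -> slp_gen P k G -> slp_gen P' k G.
Proof.
move=> sub [vs [slp_vs size_vs sub_G]]; exists vs; split => //; first exact: sub_slp slp_vs.
by move=> w /sub_G; rewrite !mem_cat => /orP [->|/sub ->]; rewrite ?orbT.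
Qed.

Lemma slp_gen_weaken P k k' G G' :
  (k <= k')%N -> {subset G' <= G} -> slp_gen P k G -> slp_gen P k' G'.
Proof.
move=> le_k sub [vs [slp_vs size_vs sub_G]]; exists vs; split => //.
  exact: leq_trans le_k.
by move=> w /sub /sub_G.
Qed.

Lemma slp_gen_cat P k1 k2 G1 G2 :
  slp_gen P k1 G1 -> slp_gen (G1 ++ P) k2 G2 -> slp_gen P (k1 + k2) (G1 ++ G2).
Proof.
move=> [vs1 [slp1 size1 sub1]] gen2.
have [vs2 [slp2 size2 sub2]] : slp_gen (rev vs1 ++ P) k2 G2.
  apply: sub_slp_gen gen2 => w; rewrite !mem_cat mem_rev => /orP [/sub1|->]; rewrite ?orbT //.
  by rewrite mem_cat.
exists (vs1 ++ vs2); split; [exact: slp_cat | by rewrite size_cat leq_add |].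
move=> w; rewrite mem_cat => /orP [/sub1|/sub2]; rewrite !mem_cat ?mem_rev.
  by case/orP => ->; rewrite ?orbT.
by case/orP => [->|/orP [] ->]; rewrite ?orbT.
Qed.

Lemma slp_gen_par P k1 k2 G1 G2 :
  slp_gen P k1 G1 -> slp_gen P k2 G2 -> slp_gen P (k1 + k2) (G1 ++ G2).
Proof.
move=> gen1 gen2; apply: slp_gen_cat gen1 _; apply: sub_slp_gen gen2 => w w_P.
by rewrite mem_cat w_P orbT.
Qed.

Lemma slp_gen0 P G : {subset G <= P} -> slp_gen P 0 G.
Proof. by move=> sub; exists [::]. Qed.

Lemma slp_gen_mem P k v : v \in P -> slp_gen P k [:: v].
Proof. by move=> v_P; exists [::]; split => // w; rewrite inE => /eqP ->. Qed.

Lemma slp_gen_leaf P v : slp_leaf v -> slp_gen P 1 [:: v].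
Proof.
move=> leaf_v; exists [:: v]; split => //= [|w]; first by split => //; left.
by rewrite !inE => ->.
Qed.

Lemma slp_gen_op P a b v : a \in P -> b \in P -> (v = a + b \/ v = a * b) ->
  slp_gen P 1 [:: v].
Proof.
move=> a_P b_P v_ab; exists [:: v]; split => //= [|w]; first by split => //; right; exists a, b.
by rewrite !inE => ->.
Qed.

Lemma slp_gen_add P k1 k2 a b :
  slp_gen P k1 [:: a] -> slp_gen P k2 [:: b] -> slp_gen P (k1 + k2).+1 [:: a + b].
Proof.
move=> gen_a gen_b; rewrite -addn1.
have gen_ab : slp_gen ([:: a] ++ [:: b] ++ P) 1 [:: a + b].
  by apply: (@slp_gen_op _ a b); [exact: mem_head | rewrite inE mem_head orbT | left].
apply: slp_gen_weaken (slp_gen_cat (slp_gen_par gen_a gen_b) gen_ab) => //.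
by move=> w; rewrite inE => /eqP ->; rewrite !mem_cat mem_head orbT.
Qed.

Lemma slp_gen_map (I : eqType) P k (s : seq I) (g : I -> R) :
  (forall i, i \in s -> slp_gen P k [:: g i]) -> slp_gen P (size s * k) (map g s).
Proof.
elim: s => [|i s IH] gen_g /=; first exact: slp_gen0.
rewrite mulSn -cat1s; apply: slp_gen_par; first by apply: gen_g; rewrite inE eqxx.
by apply: IH => j j_s; apply: gen_g; rewrite inE j_s orbT.
Qed.

Lemma slp_gen_sum P l (f : 'I_l -> R) : (forall j, slp_gen P 1 [:: f j]) ->
  slp_gen P (l + l.+1) [:: \sum_(j < l) f j].
Proof.
elim: l f => [|l IH] f gen_f.
  by rewrite big_ord0; apply/slp_gen_leaf/slp_leaf0.
rewrite big_ord_recr /=.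
have gen_S := IH (fun j => f (widen_ord (leqnSn l) j)) (fun j => gen_f _).
by apply: slp_gen_weaken (slp_gen_add gen_S (gen_f ord_max)) => //; lia.
Qed.

Lemma slp_gen_dot P l (a b : 'I_l -> R) : (forall j, a j \in P) -> (forall j, b j \in P) ->
  slp_gen P (l + l.+1) [:: \sum_(j < l) a j * b j].
Proof.
by move=> a_P b_P; apply: slp_gen_sum => j; apply: slp_gen_op (a_P j) (b_P j) _; right.
Qed.

Lemma slp_gen_has_circuit_size k (f : R) : slp_gen [::] k [:: f] -> has_circuit_size f k.
Proof.
move=> [vs [slp_vs size_vs sub_f]].
have f_vs : f \in vs by rewrite -[vs]cats0; apply: sub_f; rewrite mem_head.
exact: has_circuit_size_le size_vs (slp_has_circuit_size slp_vs f_vs).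
Qed.

End Circuits.

Section UniversalCircuit.
Variables (R : comNzRingType) (n s : nat) (pi : nat -> nat -> R) (x : 'I_n -> R).

(* Gate [k] reads its selectors [pi k t]: [t = 0] is its constant, [t = i.+1]
   the weight of the input [x i], [t = n.+1 + j] the weight of gate [j] as a
   summand, [t = n.+1 + s + j] and [t = n.+1 + s + s + j] its weights as left
   and right factor, and [t = n.+1 + s + s + s] flags the output gate.  When
   [h j e] is the degree-[e] part of an earlier gate [j], [ugate h k e] is the
   degree-[e] part of gate [k]. *)
Definition ufactorl (h : nat -> nat -> R) k e :=
  \sum_(j < k) pi k (n.+1 + s + j) * h j e.

Definition ufactorr (h : nat -> nat -> R) k e :=
  \sum_(j < k) pi k (n.+1 + s + s + j) * h j e.

Definition ugate (h : nat -> nat -> R) k e :=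
  (if e == 0%N then pi k 0 else 0) +
  (if e == 1%N then \sum_(i < n) pi k i.+1 * x i else 0) +
  \sum_(j < k) pi k (n.+1 + j) * h j e +
  \sum_(e1 < e.+1) ufactorl h k e1 * ufactorr h k (e - e1)%N.

Fixpoint ucomps k : nat -> nat -> R :=
  if k is k'.+1 then fun j e => if (j < k')%N then ucomps k' j e else ugate (ucomps k') k' e
  else fun _ _ => 0.

Definition ucomp k e := ucomps k.+1 k e.

Definition uout d :=
  \sum_(k < s) pi k (n.+1 + s + s + s) * \sum_(e < d.+1) ucomp k e.

Lemma eq_ugate h h' k e : (forall j e, (j < k)%N -> h j e = h' j e) ->
  ugate h k e = ugate h' k e.
Proof.
move=> eq_h; rewrite /ugate /ufactorl /ufactorr.
congr (_ + _ + _); first by apply: eq_bigr => j _; rewrite eq_h.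
by apply: eq_bigr => e1 _; congr (_ * _); apply: eq_bigr => j _; rewrite eq_h.
Qed.

Lemma ucomps_lt k j e : (j < k)%N -> ucomps k j e = ucomp j e.
Proof.
elim: k => [//|k IH] /=; rewrite ltnS leq_eqVlt => /orP [/eqP ->|lt_jk].
  by rewrite /ucomp /= ltnn.
by rewrite lt_jk IH.
Qed.

Lemma ucomp_rec k e : ucomp k e = ugate ucomp k e.
Proof. by rewrite /ucomp /= ltnn; apply: eq_ugate => j e' lt_jk; rewrite ucomps_lt. Qed.

End UniversalCircuit.

Section UniversalCircuitMorphism.
Variables (R R' : comNzRingType) (phi : {rmorphism R -> R'}) (n s : nat).
Variables (pi : nat -> nat -> R) (x : 'I_n -> R).
Variables (pi' : nat -> nat -> R') (x' : 'I_n -> R').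
Hypotheses (phi_pi : forall k t, phi (pi k t) = pi' k t) (phi_x : forall i, phi (x i) = x' i).

Lemma rmorph_ucomp k e : phi (ucomp s pi x k e) = ucomp s pi' x' k e.
Proof.
elim/ltn_ind: k e => k IH e.
rewrite !ucomp_rec /ugate /ufactorl /ufactorr !rmorphD !(fun_if phi) rmorph0 !rmorph_sum phi_pi.
congr (_ + _ + _ + _).
- by congr (if _ then _ else _); apply: eq_bigr => i _; rewrite rmorphM phi_pi phi_x.
- by apply: eq_bigr => j _; rewrite rmorphM phi_pi IH.
- apply: eq_bigr => e1 _; rewrite rmorphM !rmorph_sum.
  by congr (_ * _); apply: eq_bigr => j _; rewrite rmorphM phi_pi IH.
Qed.

Lemma rmorph_uout d : phi (uout s pi x d) = uout s pi' x' d.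
Proof.
rewrite rmorph_sum; apply: eq_bigr => k _; rewrite rmorphM rmorph_sum phi_pi.
by congr (_ * _); apply: eq_bigr => e _; rewrite rmorph_ucomp.
Qed.

End UniversalCircuitMorphism.

Section UniversalCircuitDegree.
Variables (S : comNzRingType) (n s : nat) (c : nat -> nat -> S).
Local Notation ucompX := (ucomp s (fun k t => (c k t)%:MP) (fun i : 'I_n => 'X_i)).
Local Notation uoutX := (uout s (fun k t => (c k t)%:MP) (fun i : 'I_n => 'X_i)).

Lemma ucomp_homog k e : ucompX k e \is e.-homog.
Proof.
elim/ltn_ind: k e => k IH e.
have dot_homog (a : nat -> S) e' : \sum_(j < k) (a j)%:MP * ucompX j e' \is e'.-homog.
  by apply: rpred_sum => j _; rewrite mul_mpolyC rpredZ // IH.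
rewrite ucomp_rec /ugate /ufactorl /ufactorr /= !rpredD //.
- by case: eqP => [->|_]; rewrite ?rpred0 // -alg_mpolyC rpredZ // dhomog1.
- case: eqP => [->|_]; rewrite ?rpred0 //; apply: rpred_sum => i _.
  by rewrite mul_mpolyC rpredZ // dhomogX; apply/eqP; apply: mdeg1.
- exact: (dot_homog (fun j => c k (n.+1 + j))).
- apply: rpred_sum => e1 _; have le_e1 : (e1 <= e)%N := ltn_ord e1.
  have := dhomogM (dot_homog (fun j => c k (n.+1 + s + j)) e1)
    (dot_homog (fun j => c k (n.+1 + s + s + j)) (e - e1)%N).
  by rewrite subnKC.
Qed.

Lemma uout_coef_gt d m : (d < mdeg m)%N -> (uoutX d)@_m = 0.
Proof.
move=> lt_dm; rewrite /uout raddf_sum big1 // => k _.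
rewrite /= mcoeffCM raddf_sum big1 ?mulr0 // => e _.
apply: dhomog_nemf_coeff (ucomp_homog k e) _.
by rewrite neq_ltn (leq_trans (ltn_ord e) lt_dm) orbT.
Qed.

End UniversalCircuitDegree.

Lemma msize_le_coef0 (S : nzRingType) n (p : {mpoly S[n]}) d :
  (forall m, (d < mdeg m)%N -> p@_m = 0) -> (msize p <= d.+1)%N.
Proof.
move=> coef0; rewrite msizeE; apply/bigmax_leqP_seq => m m_supp _.
by rewrite ltnS leqNgt; apply: contraL m_supp => /coef0 /eqP; rewrite mcoeff_eq0.
Qed.

Lemma sum_ord_delta (R : nzRingType) k (f : 'I_k -> R) (o : 'I_k) j : (o : nat) = j ->
  \sum_(i < k) ((i : nat) == j)%:R * f i = f o.
Proof.
move=> <-; rewrite (bigD1 o) //= eqxx mul1r big1 ?addr0 // => i ne_io.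
by move: ne_io; rewrite -val_eqE => /negPf ->; rewrite mul0r.
Qed.

Ltac decide_nat_eqs :=
  repeat match goal with |- context [(?a == ?b)] =>
    first [rewrite (_ : (a == b) = true); last lia
          | rewrite (_ : (a == b) = false); last lia] end.

Definition sel_width n s := (n.+1 + s + s + s).+1.

Section Specialisation.
Variables (F : comNzRingType) (n s : nat).
Local Notation R := {mpoly F[n]}.

(* [graded f] is [f] with every [x_i] replaced by [x_i T]; its coefficient of
   [T^e] is the degree-[e] part of [f]. *)
Local Notation graded := (mmap (polyC \o @mpolyC n F) (fun i : 'I_n => ('X_i)%:P * 'X)).

Lemma graded_const a : graded a%:MP = (a%:MP)%:P.
Proof. exact: mmapC. Qed.

Lemma graded_var i : graded 'X_i = ('X_i)%:P * 'X.
Proof. by rewrite mmapX mmap1U. Qed.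

Lemma sum_graded_coef d (f : R) : (msize f <= d.+1)%N -> \sum_(e < d.+1) (graded f)`_e = f.
Proof.
move=> size_f; rewrite (mmapE _ size_f).
have graded_mon (m : 'X_{1..n}) :
    mmap1 (fun i : 'I_n => ('X_i)%:P * 'X) m = ('X_[m])%:P * 'X^(mdeg m) :> {poly R}.
  rewrite /mmap1; under eq_bigr do rewrite exprMn.
  rewrite big_split /= prodrXr -mdegE mpolyXE_id rmorph_prod.
  by congr (_ * _); apply: eq_bigr => i _; rewrite rmorphXn.
under eq_bigr do rewrite coef_sum.
rewrite exchange_big /= {2}(mpolywE size_f); apply: eq_bigr => m _.
under eq_bigr do rewrite graded_mon mulrA -rmorphM coefCM coefXn mulrC.
rewrite -mul_mpolyC.
exact: (sum_ord_delta (fun=> (f@_m)%:MP * 'X_[m]) (o := Ordinal (bmdeg m)) erefl).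
Qed.

Variable c : circuit F.

Definition circuit_sel k t : F :=
  if (k < size c)%N && (t < sel_width n s)%N then
    (if t == (n.+1 + s + s + s)%N then (k == (size c).-1)%:R else 0) +
    match nth (GConst 0) c k with
    | GConst a => if t == 0%N then a else 0
    | GVar i => (t == i.+1)%:R
    | GAdd j l => (t == n.+1 + j)%:R + (t == n.+1 + l)%:R
    | GMul j l => (t == n.+1 + s + j)%:R + (t == n.+1 + s + s + l)%:R
    end
  else 0.

Local Notation sel := (fun k t => (circuit_sel k t)%:MP : R).
Local Notation V := (@eval_gates F n [::] c).

Section Gate.
Variable k : nat.
Hypotheses (lt_k : (k < size c)%N) (le_cs : (size c <= s)%N).
Hypothesis wf_k : wf_gates n k [:: nth (GConst 0) c k].

Lemma circuit_sel_gate t : (t < n.+1 + s + s + s)%N ->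
  circuit_sel k t = match nth (GConst 0) c k with
    | GConst a => if t == 0%N then a else 0
    | GVar i => (t == i.+1)%:R
    | GAdd j l => (t == n.+1 + j)%:R + (t == n.+1 + l)%:R
    | GMul j l => (t == n.+1 + s + j)%:R + (t == n.+1 + s + s + l)%:R
    end.
Proof.
move=> lt_t; rewrite /circuit_sel lt_k /sel_width ltnW //=.
by rewrite (_ : (t == _) = false) ?add0r //; lia.
Qed.

Lemma circuit_sel_const :
  circuit_sel k 0 = if nth (GConst 0) c k is GConst a then a else 0.
Proof. by rewrite circuit_sel_gate //; case: nth => *; decide_nat_eqs; rewrite ?addr0. Qed.

Lemma circuit_sel_var i : (i < n)%N ->
  circuit_sel k i.+1 = if nth (GConst 0) c k is GVar i' then (i == i')%:R else 0.
Proof.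
move=> lt_i; rewrite circuit_sel_gate; last lia.
by case: nth wf_k => [i'|a|j' l'|j' l'] wf_g; rewrite /= in wf_g;
  decide_nat_eqs; rewrite ?addr0.
Qed.

Lemma circuit_sel_add j : (j < s)%N -> circuit_sel k (n.+1 + j) =
  if nth (GConst 0) c k is GAdd j' l' then (j == j')%:R + (j == l')%:R else 0.
Proof.
move=> lt_j; rewrite circuit_sel_gate; last lia.
by case: nth wf_k => [i|a|j' l'|j' l'] wf_g; rewrite /= in wf_g;
  decide_nat_eqs; rewrite ?eqn_add2l ?mulr0n ?add0r ?addr0.
Qed.

Lemma circuit_sel_left j : (j < s)%N -> circuit_sel k (n.+1 + s + j) =
  if nth (GConst 0) c k is GMul j' l' then (j == j')%:R else 0.
Proof.
move=> lt_j; rewrite circuit_sel_gate; last lia.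
by case: nth wf_k => [i|a|j' l'|j' l'] wf_g; rewrite /= in wf_g;
  decide_nat_eqs; rewrite ?eqn_add2l ?mulr0n ?add0r ?addr0.
Qed.

Lemma circuit_sel_right j : (j < s)%N -> circuit_sel k (n.+1 + s + s + j) =
  if nth (GConst 0) c k is GMul j' l' then (j == l')%:R else 0.
Proof.
move=> lt_j; rewrite circuit_sel_gate; last lia.
by case: nth wf_k => [i|a|j' l'|j' l'] wf_g; rewrite /= in wf_g;
  decide_nat_eqs; rewrite ?eqn_add2l ?mulr0n ?add0r ?addr0.
Qed.

Lemma ugate_circuit_sel h e :
  ugate s sel (fun i => 'X_i) h k e =
  match nth (GConst 0) c k with
  | GConst a => if e == 0%N then a%:MP else 0
  | GVar i => if e == 1%N then gate_value [::] (@GVar F i) else 0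
  | GAdd j l => h j e + h l e
  | GMul j l => \sum_(e1 < e.+1) h j e1 * h l (e - e1)%N
  end.
Proof.
have lt_js (j : 'I_k) : (j < s)%N by rewrite (leq_trans _ le_cs) // (ltn_trans _ lt_k).
rewrite /ugate /ufactorl /ufactorr /= circuit_sel_const.
under [\sum_(i < n) _]eq_bigr => i _ do rewrite circuit_sel_var //.
under [\sum_(j < k) _ * h j e]eq_bigr => j _ do rewrite circuit_sel_add //.
under [\sum_(e1 < e.+1) _]eq_bigr => e1 _.
  under eq_bigr => j _ do rewrite circuit_sel_left //.
  under [X in _ * X]eq_bigr => j _ do rewrite circuit_sel_right //.
  over.
have sum0 l (f : 'I_l -> R) : \sum_(j < l) 0 * f j = 0.
  by rewrite big1 // => j _; rewrite mul0r.
have prod0 (f g : nat -> nat -> R) :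
    \sum_(e1 < e.+1) (\sum_(j < k) 0 * f j e1) * (\sum_(j < k) 0 * g j (e - e1)%N) = 0.
  by rewrite big1 // => e1 _; rewrite !sum0 mul0r.
case: nth wf_k => [i|a|j l|j l] /=; rewrite !mpolyC0 !sum0 ?prod0 ?if_same ?add0r ?addr0.
- rewrite andbT => lt_i; under eq_bigr do rewrite mpolyC_nat.
  rewrite (sum_ord_delta (fun i' : 'I_n => 'X_i') (o := Ordinal lt_i)) //.
  by case: eqP => [lt_i'|]; [rewrite (bool_irrelevance lt_i' lt_i) | rewrite lt_i].
- by [].
- rewrite andbT => /andP [lt_j lt_l].
  under eq_bigr do rewrite mpolyCD !mpolyC_nat mulrDl.
  rewrite big_split /= (sum_ord_delta (fun j' : 'I_k => h j' e) (o := Ordinal lt_j)) //.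
  by rewrite (sum_ord_delta (fun j' : 'I_k => h j' e) (o := Ordinal lt_l)).
- rewrite andbT => /andP [lt_j lt_l]; apply: eq_bigr => e1 _.
  under eq_bigr do rewrite mpolyC_nat.
  rewrite (sum_ord_delta (fun j' : 'I_k => h j' e1) (o := Ordinal lt_j)) //.
  under eq_bigr do rewrite mpolyC_nat.
  by rewrite (sum_ord_delta (fun j' : 'I_k => h j' (e - e1)%N) (o := Ordinal lt_l)).
Qed.

End Gate.

Lemma circuit_sel_out k : wf_gates n 0 c -> (0 < size c <= s)%N ->
  circuit_sel k (n.+1 + s + s + s) = (k == (size c).-1)%:R.
Proof.
move=> wf_c /andP [c_gt0 le_cs]; rewrite /circuit_sel /sel_width ltnSn andbT eqxx.
case: (ltnP k (size c)) => [lt_k|le_k]; last by rewrite (_ : (k == _) = false) //; lia.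
have := wf_gates_nth wf_c lt_k; rewrite add0n.
by case: nth => [i|a|j l|j l] /= wf_g; decide_nat_eqs; rewrite /= ?mulr0n ?addr0.
Qed.

Lemma ucomp_circuit_sel k e : wf_gates n 0 c -> (size c <= s)%N -> (k < size c)%N ->
  ucomp s sel (fun i => 'X_i) k e = (graded (nth 0 V k))`_e.
Proof.
move=> wf_c le_cs; elim/ltn_ind: k e => k IH e lt_k.
have wf_k := wf_gates_nth wf_c lt_k; rewrite add0n in wf_k.
rewrite ucomp_rec ugate_circuit_sel // nth_eval_gates //.
case: nth wf_k => [i|a|j l|j l] /=.
- rewrite andbT => lt_i; case: eqP => [lt_i'|]; last by rewrite lt_i.
  by rewrite graded_var coefMX coefC; case: e => [|[|e]].
- by rewrite graded_const coefC.
- rewrite andbT => /andP [lt_j lt_l].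
  by rewrite rmorphD coefD !IH // (ltn_trans _ lt_k).
- rewrite andbT => /andP [lt_j lt_l].
  by rewrite rmorphM coefM; apply: eq_bigr => e1 _; rewrite !IH // (ltn_trans _ lt_k).
Qed.

Lemma uout_circuit_sel d f : computes c f -> (size c <= s)%N -> (msize f <= d.+1)%N ->
  uout s sel (fun i => 'X_i) d = f.
Proof.
move=> [c_gt0 wf_c last_c] le_cs size_f.
have lt_out : ((size c).-1 < s)%N by lia.
have lt_last : ((size c).-1 < size c)%N by lia.
rewrite /uout; under eq_bigr do rewrite circuit_sel_out ?c_gt0 // mpolyC_nat.
rewrite (sum_ord_delta _ (o := Ordinal lt_out)) //=.
under eq_bigr do rewrite ucomp_circuit_sel //.
have -> : (size c).-1 = (size V).-1 by rewrite size_eval_gates.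
by rewrite nth_last last_c sum_graded_coef.
Qed.

End Specialisation.

Definition gate_budget n s d := (n + n.+1 + (s + s.+1) + (d.+1 + d.+2) + 4)%N.
Definition stage_budget n s d := (2 * (d.+1 * (s + s.+1)) + d.+1 * gate_budget n s d)%N.
Definition uout_budget n s d :=
  (n + s * sel_width n s + s * stage_budget n s d + (s * (d.+1 + d.+2) + (s + s.+1)))%N.

Section UniversalCircuitSize.
Variables (F : comNzRingType) (m n s d : nat).
Variables (pi : nat -> nat -> {mpoly F[m]}) (x : 'I_n -> {mpoly F[m]}).
Hypotheses (leaf_pi : forall k t, (k < s)%N -> (t < sel_width n s)%N -> slp_leaf (pi k t))
           (leaf_x : forall i, slp_leaf (x i)).
Local Notation ucomp := (ucomp s pi x).
Local Notation ufactorl := (ufactorl n s pi).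
Local Notation ufactorr := (ufactorr n s pi).

Definition leaves := map x (enum 'I_n) ++
  [seq pi kt.1 kt.2 | kt <- [seq (k, t) | k <- iota 0 s, t <- iota 0 (sel_width n s)]].

Definition ucomps_upto k := [seq ucomp j e | j <- iota 0 k, e <- iota 0 d.+1].

Lemma mem_leaves_pi k t : (k < s)%N -> (t < sel_width n s)%N -> pi k t \in leaves.
Proof.
move=> lt_k lt_t; rewrite mem_cat; apply/orP; right.
by apply/mapP; exists (k, t) => //; apply: (allpairs_f pair); rewrite mem_iota.
Qed.

Lemma mem_leaves_x i : x i \in leaves.
Proof. by rewrite mem_cat map_f ?mem_enum. Qed.

Lemma mem_ucomps_upto k j e : (j < k)%N -> (e <= d)%N -> ucomp j e \in ucomps_upto k.
Proof. by move=> lt_j le_e; apply: (allpairs_f (fun j e => ucomp j e)); rewrite mem_iota. Qed.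

Lemma slp_gen_leaves : slp_gen [::] (n + s * sel_width n s) leaves.
Proof.
have gen_x := @slp_gen_map _ _ _ [::] 1 (enum 'I_n) x (fun i _ => slp_gen_leaf _ (leaf_x i)).
have gen_pi := @slp_gen_map _ _ _ [::] 1 [seq (k, t) | k <- iota 0 s, t <- iota 0 (sel_width n s)]
  (fun kt => pi kt.1 kt.2).
rewrite size_enum_ord muln1 in gen_x; rewrite size_allpairs !size_iota muln1 in gen_pi.
apply: slp_gen_par gen_x (gen_pi _) => -[k t] /allpairsP [[k' t'] [+ + [-> ->]]].
by rewrite !mem_iota => /= k_s t_W; apply/slp_gen_leaf/leaf_pi.
Qed.

Lemma slp_gen_ucomp P k e : (k < s)%N -> (e <= d)%N -> {subset leaves <= P} ->
  (forall j e', (j < k)%N -> (e' <= d)%N -> ucomp j e' \in P) ->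
  (forall e', (e' <= d)%N -> ufactorl ucomp k e' \in P) ->
  (forall e', (e' <= d)%N -> ufactorr ucomp k e' \in P) ->
  slp_gen P (gate_budget n s d) [:: ucomp k e].
Proof.
move=> lt_k le_e sub_leaves ucomp_P left_P right_P.
have pi_P t : (t < sel_width n s)%N -> pi k t \in P.
  by move=> lt_t; apply/sub_leaves/mem_leaves_pi.
have gen_const : slp_gen P 1 [:: if e == 0%N then pi k 0 else 0].
  by case: eqP => _; [apply/slp_gen_mem/pi_P | apply/slp_gen_leaf/slp_leaf0].
have gen_var : slp_gen P (n + n.+1) [:: if e == 1%N then \sum_(i < n) pi k i.+1 * x i else 0].
  case: eqP => _; last first.
    by apply: slp_gen_weaken (slp_gen_leaf P (slp_leaf0 _ _)) => //; lia.
  apply: slp_gen_dot => i; first by apply: pi_P; have := ltn_ord i; rewrite /sel_width; lia.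
  exact/sub_leaves/mem_leaves_x.
have gen_add : slp_gen P (k + k.+1) [:: \sum_(j < k) pi k (n.+1 + j) * ucomp j e].
  apply: slp_gen_dot => j; first by apply: pi_P; have := ltn_ord j; rewrite /sel_width; lia.
  exact: ucomp_P.
have gen_mul : slp_gen P (e.+1 + e.+2)
    [:: \sum_(e1 < e.+1) ufactorl ucomp k e1 * ufactorr ucomp k (e - e1)%N].
  by apply: slp_gen_dot => e1; [apply: left_P | apply: right_P]; have := ltn_ord e1; lia.
rewrite ucomp_rec; apply: slp_gen_weaken
  (slp_gen_add (slp_gen_add (slp_gen_add gen_const gen_var) gen_add) gen_mul) => //.
by rewrite /gate_budget; lia.
Qed.

Lemma slp_gen_stage k : (k < s)%N ->
  slp_gen (ucomps_upto k ++ leaves) (stage_budget n s d) [seq ucomp k e | e <- iota 0 d.+1].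
Proof.
move=> lt_k; set P := ucomps_upto k ++ leaves.
have pi_P t : (t < sel_width n s)%N -> pi k t \in P.
  by move=> lt_t; rewrite mem_cat mem_leaves_pi ?orbT.
have ucomp_P j e : (j < k)%N -> (e <= d)%N -> ucomp j e \in P.
  by move=> lt_j le_e; rewrite mem_cat mem_ucomps_upto.
have gen_factor (f : nat -> nat -> {mpoly F[m]}) (offset : nat) :
    (offset + k <= n.+1 + s + s + s)%N ->
    (forall e, f k e = \sum_(j < k) pi k (offset + j) * ucomp j e) ->
    slp_gen P (d.+1 * (k + k.+1)) [seq f k e | e <- iota 0 d.+1].
  move=> le_offset f_dot; have := @slp_gen_map _ _ _ P _ (iota 0 d.+1) (f k).
  rewrite size_iota; apply => e; rewrite mem_iota f_dot => /= lt_e.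
  apply: slp_gen_dot => j; last by apply: ucomp_P (ltn_ord j) _; lia.
  by apply: pi_P; have := ltn_ord j; rewrite /sel_width; lia.
set Ls := [seq ufactorl ucomp k e | e <- iota 0 d.+1].
set Rs := [seq ufactorr ucomp k e | e <- iota 0 d.+1].
have gen_L : slp_gen P (d.+1 * (k + k.+1)) Ls.
  by apply: (gen_factor (ufactorl ucomp) (n.+1 + s)) => //; lia.
have gen_R : slp_gen P (d.+1 * (k + k.+1)) Rs.
  by apply: (gen_factor (ufactorr ucomp) (n.+1 + s + s)) => //; lia.
have gen_gate : slp_gen ((Ls ++ Rs) ++ P) (d.+1 * gate_budget n s d)
    [seq ucomp k e | e <- iota 0 d.+1].
  have := @slp_gen_map _ _ _ ((Ls ++ Rs) ++ P) _ (iota 0 d.+1) (ucomp k).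
  rewrite size_iota; apply => e; rewrite mem_iota add0n ltnS => le_e.
  apply: slp_gen_ucomp => //.
  - by move=> w w_leaves; rewrite mem_cat; apply/orP; right; rewrite mem_cat w_leaves orbT.
  - by move=> j e' lt_j le_e'; rewrite mem_cat ucomp_P ?orbT.
  - move=> e' le_e'; rewrite mem_cat; apply/orP; left; rewrite mem_cat; apply/orP; left.
    by apply: map_f; rewrite mem_iota.
  - move=> e' le_e'; rewrite mem_cat; apply/orP; left; rewrite mem_cat; apply/orP; right.
    by apply: map_f; rewrite mem_iota.
apply: slp_gen_weaken (slp_gen_cat (slp_gen_par gen_L gen_R) gen_gate).
  by rewrite /stage_budget leq_add2r addnn -mul2n leq_mul2l /= leq_mul2l /=; lia.
by move=> w w_k; rewrite mem_cat w_k orbT.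
Qed.

Lemma ucomps_uptoS k :
  ucomps_upto k.+1 = ucomps_upto k ++ [seq ucomp k e | e <- iota 0 d.+1].
Proof. by rewrite /ucomps_upto -[k.+1]addn1 iotaD allpairs_cat /= cats0. Qed.

Lemma slp_gen_ucomps_upto k : (k <= s)%N ->
  slp_gen leaves (k * stage_budget n s d) (ucomps_upto k).
Proof.
elim: k => [|k IH] le_ks; first exact: slp_gen0.
have gen_k := slp_gen_cat (IH (ltnW le_ks)) (sub_slp_gen _ (slp_gen_stage le_ks)).
rewrite mulSn addnC ucomps_uptoS; apply: gen_k => w.
by rewrite !mem_cat => /orP [->|->]; rewrite ?orbT.
Qed.

Lemma slp_gen_uout : slp_gen [::] (uout_budget n s d) [:: uout s pi x d].
Proof.
set P := leaves ++ ucomps_upto s.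
have gen_ucomps : slp_gen [::] (n + s * sel_width n s + s * stage_budget n s d) P.
  have sub_leaves : {subset leaves <= leaves ++ [::]} by move=> w; rewrite cats0.
  exact: slp_gen_cat slp_gen_leaves (sub_slp_gen sub_leaves (slp_gen_ucomps_upto (leqnn s))).
set sums := [seq \sum_(e < d.+1) ucomp k e | k <- iota 0 s].
have gen_sums : slp_gen P (s * (d.+1 + d.+2)) sums.
  have := @slp_gen_map _ _ _ P _ (iota 0 s) (fun k => \sum_(e < d.+1) ucomp k e).
  rewrite size_iota; apply => k; rewrite mem_iota => /= lt_k.
  apply: slp_gen_sum => e; apply: slp_gen_mem.
  by rewrite mem_cat mem_ucomps_upto ?orbT // -ltnS.
have gen_out : slp_gen (sums ++ P) (s + s.+1) [:: uout s pi x d].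
  apply: slp_gen_dot => k; last by rewrite mem_cat map_f // mem_iota /=.
  by rewrite mem_cat; apply/orP; right; rewrite mem_cat mem_leaves_pi.
have sub_P : {subset P <= P ++ [::]} by move=> w; rewrite cats0.
apply: slp_gen_weaken (slp_gen_cat gen_ucomps (sub_slp_gen sub_P (slp_gen_cat gen_sums gen_out))).
  by rewrite /uout_budget; lia.
by move=> w; rewrite inE => /eqP ->; rewrite !mem_cat inE eqxx !orbT.
Qed.

End UniversalCircuitSize.

Lemma comp_mpoly_neq0 (F : comNzRingType) N r (D : {mpoly F[N]}) (G : 'I_N -> {mpoly F[r]})
    (y : 'I_r -> F) :
  D.@[fun i => (G i).@[y]] != 0 -> D \mPo [tuple G i | i < N] != 0.
Proof.
apply: contra_neq => D_G0; have := congr1 (meval y) D_G0.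
rewrite comp_mpoly_meval meval0 => <-.
by apply: meval_eq => i; rewrite tnth_mktuple.
Qed.

Section Generator.
Variables (F : fieldType) (n d s : nat).
Local Notation N := (Nnd n d).
Local Notation W := (sel_width n s).
(* one spare variable, so that [inord] indexes the [s * W] selectors *)
Local Notation r := (s * W).+1.

Definition sel_var k t : {mpoly F[r]} :=
  if (k < s)%N && (t < W)%N then 'X_(inord (k * W + t)) else 0.

Definition univ_poly : {mpoly {mpoly F[r]}[n]} :=
  uout s (fun k t => (sel_var k t)%:MP) (fun i => 'X_i) d.

Definition univ_gen (i : 'I_N) : {mpoly F[r]} := univ_poly@_(mon i).

Lemma msize_univ_poly : (msize univ_poly <= d.+1)%N.
Proof. exact/msize_le_coef0/uout_coef_gt. Qed.

Lemma big_mon (V : nmodType) (G : 'X_{1..n} -> V) :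
  \sum_(i < N) G (mon i) = \sum_(m : 'X_{1..n < d.+1}) G m.
Proof.
rewrite /mon -(big_enum_val (A := {: 'X_{1..n < d.+1}}) (fun m => G (bmnm m))).
exact: eq_bigl.
Qed.

Lemma leaf_sel_var k t : (k < s)%N -> (t < W)%N ->
  slp_leaf (sel_var k t \mPo yvar F n r).
Proof.
move=> lt_k lt_t; rewrite /sel_var lt_k lt_t /=; left; exists (rshift n (inord (k * W + t))).
by rewrite comp_mpolyXU -tnth_nth tnth_mktuple.
Qed.

Lemma gen_poly_univ_gen :
  gen_poly univ_gen = uout s (fun k t => sel_var k t \mPo yvar F n r) (fun i => 'X_(lshift r i)) d.
Proof.
have -> : gen_poly univ_gen = mmap (comp_mpoly (yvar F n r)) (fun i => 'X_(lshift r i)) univ_poly.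
  rewrite (mmapE _ msize_univ_poly) /gen_poly.
  exact: (big_mon (fun m => (univ_poly@_m \mPo yvar F n r) * mmap1 (fun i => 'X_(lshift r i)) m)).
by rewrite (@rmorph_uout _ _ _ _ s _ _ (fun k t => sel_var k t \mPo yvar F n r)
  (fun i => 'X_(lshift r i))) // => [k t|i] /=; rewrite ?mmapC // mmapX mmap1U.
Qed.

Lemma gen_poly_univ_gen_size : has_circuit_size (gen_poly univ_gen) (uout_budget n s d).
Proof.
rewrite gen_poly_univ_gen; apply: slp_gen_has_circuit_size.
by apply: slp_gen_uout => [|i]; [exact: leaf_sel_var | left; exists (lshift r i)].
Qed.

Lemma gen_at_univ_gen alpha :
  gen_at univ_gen alpha = uout s (fun k t => ((sel_var k t).@[alpha])%:MP) (fun i => 'X_i) d.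
Proof.
have -> : gen_at univ_gen alpha = map_mpoly (meval alpha) univ_poly.
  have size_map : (msize (map_mpoly (meval alpha) univ_poly) <= d.+1)%N.
    by apply: msize_le_coef0 => m lt_dm; rewrite mcoeff_map_mpoly uout_coef_gt // raddf0.
  rewrite /gen_at (mpolywE size_map); under [RHS]eq_bigr do rewrite mcoeff_map_mpoly.
  exact: (big_mon (fun m => (univ_poly@_m).@[alpha] *: 'X_[m])).
by rewrite (@rmorph_uout _ _ _ _ s _ _ (fun k t => ((sel_var k t).@[alpha])%:MP)
  (fun i => 'X_i)) // => [k t|i] /=; rewrite ?map_mpolyC ?map_mpolyX.
Qed.

Lemma gen_at_univ_gen_size alpha : has_circuit_size (gen_at univ_gen alpha) (uout_budget n s d).
Proof.
rewrite gen_at_univ_gen; apply: slp_gen_has_circuit_size.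
by apply: slp_gen_uout => [k t _ _|i]; [right; eexists | left; exists i].
Qed.

Definition circuit_point (c : circuit F) (i : 'I_r) : F := circuit_sel n s c (i %/ W) (i %% W).

Lemma sel_var_circuit_point c k t : (size c <= s)%N ->
  (sel_var k t).@[circuit_point c] = circuit_sel n s c k t.
Proof.
move=> le_cs; rewrite /sel_var; case: ifP => [/andP [lt_k lt_t]|out_kt].
  have W_gt0 : (0 < W)%N by [].
  rewrite mevalXU /circuit_point inordK; last by nia.
  by rewrite divnMDl // divn_small // addn0 modnMDl modn_small.
rewrite meval0 /circuit_sel; case: ifP => // /andP [lt_kc lt_t].
by move: out_kt; rewrite lt_t andbT (leq_trans lt_kc le_cs).
Qed.

Lemma univ_gen_circuit_point c f : computes c f -> (size c <= s)%N -> deg_le d f ->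
  (fun i => (univ_gen i).@[circuit_point c]) =1 coeffv f.
Proof.
move=> comp_c le_cs deg_f i.
rewrite /univ_gen -mcoeff_map_mpoly /univ_poly.
rewrite (@rmorph_uout _ _ _ _ s _ _ (fun k t => (circuit_sel n s c k t)%:MP) (fun i => 'X_i)).
- by rewrite (uout_circuit_sel comp_c le_cs deg_f).
- by move=> k t /=; rewrite map_mpolyC /= sel_var_circuit_point.
- by move=> j /=; rewrite map_mpolyX.
Qed.

End Generator.


Definition budget_poly : {mpoly int[3]} :=
  30%:R * ('X_(@Ordinal 3 0 isT) + 'X_(@Ordinal 3 1 isT) + 'X_(@Ordinal 3 2 isT) + 1) ^+ 3.

Lemma eval3_budget_poly n d s : eval3 budget_poly n d s = (30 * (n + d + s + 1) ^ 3)%N%:Z.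
Proof.
rewrite /eval3 /budget_poly mevalM mevalMn meval1 !exprS expr0 mulr1.
rewrite !mevalM !mevalD meval1 !mevalXU /=.
by rewrite -!PoszD -!PoszM !expnS expn0 muln1.
Qed.

Lemma uout_budget_le n s d : (uout_budget n s d <= 30 * (n + d + s + 1) ^ 3)%N.
Proof. rewrite /uout_budget /stage_budget /gate_budget /sel_width; nia. Qed.

Theorem lemma3p2 :
  exists p : {mpoly int[3]},
  forall (F : fieldType) (n d s : nat), (1 <= n)%N -> (1 <= s)%N ->
  forall (Dcl : {mpoly F[Nnd n d]} -> Prop),
    (exists C : {mpoly F[n]} -> Prop, succinct_hitting_set s Dcl C) ->
    exists (s' : nat) (r : nat) (G : 'I_(Nnd n d) -> {mpoly F[r]}),
      s'%:Z <= eval3 p n d s /\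
      succinct_generator s' s' Dcl G.
Proof.
exists budget_poly => F n d s _ _ Dcl [C [deg_C size_C hit_C]].
exists (uout_budget n s d), _, (@univ_gen F n d s); split.
  by rewrite eval3_budget_poly lez_nat uout_budget_le.
split; [exact: gen_poly_univ_gen_size | exact: gen_at_univ_gen_size |].
move=> D Dcl_D; split => [D_neq0|]; last by apply: contra_neq => ->; rewrite comp_mpoly0.
have [_ [f C_f ->] Df_neq0] := hit_C D Dcl_D D_neq0.
have [c [comp_c size_c]] := size_C f C_f.
apply: (comp_mpoly_neq0 (y := circuit_point c)).
by rewrite (meval_eq _ (univ_gen_circuit_point comp_c size_c (deg_C f C_f))).
Qed.
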